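(* Let $\lambda$ be a normalized additively alternating $n\times n$ complex matrix of rank $n-1$, and let $I\subseteq\{0,\dots,n-1\}$ be the vertex set of a cycle of smoothable edges in the smoothing diagram of $\lambda$. Then: (1) every smoothable edge with both endpoints in $I$ (resp. both outside $I$) has all its colored angles with vertex in $I$ (resp. outside $I$); (2) the submatrix $(\lambda_{ij})_{i,j\in I}$ is normalized of corank one, and its smoothing diagram consists of the given cycle on $I$, with the same colorings of edges and angles; (3) $\lambda_{i_1j}=\lambda_{i_2j}$ for all $i_1,i_2\in I$ and $j\notin I$.
   Context: Additively alternating: $\lambda_{ji}=-\lambda_{ij}$; normalized: rows sum to $0$. The biresidue matrix of a normalized $\lambda$ of rank $m-1$ (size $m$) is the unique normalized alternating $b$ with $b|_\Delta=(\lambda|_\Delta)^{-1}$, $\Delta=\{z\in\mathbb{C}^m:\sum z_i=0\}$. Smoothing diagram of $\lambda$: the complete graph on the index set, where an edge $\{i,j\}$ is colored (smoothable) if $b_{ij}\ne0$ and $\theta_k:=(b_{jk}+b_{ki})/b_{ij}\in\mathbb{Z}_{\ge0}$ for all $k\ne i,j$, and for such an edge the angle $i-k-j$ is colored (darkly if $\theta_k=2$, lightly if $\theta_k=1$) whenever $\theta_k\ne0$. A cycle of smoothable edges is a sequence of $m\ge3$ distinct vertices $i_1,\dots,i_m$ with $\{i_1,i_2\},\dots,\{i_{m-1},i_m\},\{i_m,i_1\}$ all smoothable. *)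

(* Scalars: an arbitrary numClosedFieldType C (the complex
   numbers are an instance; the statement is purely algebraic). *)
From HB Require Import structures.
From mathcomp Require Import all_boot all_order all_algebra.
Set Implicit Arguments. Unset Strict Implicit. Unset Printing Implicit Defensive.
Import Order.TTheory GRing.Theory Num.Theory.
Local Open Scope ring_scope.

Section Defs.
Variable C : numClosedFieldType.

Definition alternating n (lam : 'M[C]_n) : Prop :=
  forall i j : 'I_n, lam j i = - lam i j.

Definition normalized n (lam : 'M[C]_n) : Prop :=
  forall i : 'I_n, \sum_(j < n) lam i j = 0.

Definition in_Delta n (z : 'cV[C]_n) : Prop := \sum_(i < n) z i 0 = 0.

Definition is_biresidue n (lam b : 'M[C]_n) : Prop :=
  [/\ alternating b, normalized b &
      forall z : 'cV[C]_n, in_Delta z -> b *m (lam *m z) = z].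

Definition theta n (b : 'M[C]_n) (i j k : 'I_n) : C :=
  (b j k + b k i) / b i j.

Definition smoothable n (b : 'M[C]_n) (i j : 'I_n) : Prop :=
  [/\ i != j, b i j != 0 &
      forall k : 'I_n, k != i -> k != j -> exists m : nat, theta b i j k = m%:R].

Definition angle_colored n (b : 'M[C]_n) (i j k : 'I_n) : Prop :=
  [/\ smoothable b i j, k != i, k != j & theta b i j k != 0].
Definition angle_dark n (b : 'M[C]_n) (i j k : 'I_n) : Prop :=
  [/\ smoothable b i j, k != i, k != j & theta b i j k = 2%:R].
Definition angle_light n (b : 'M[C]_n) (i j k : 'I_n) : Prop :=
  [/\ smoothable b i j, k != i, k != j & theta b i j k = 1].

Definition smoothable_cycle n (b : 'M[C]_n) m (c : 'I_m -> 'I_n) : Prop :=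
  [/\ (3 <= m)%N, injective c & forall t : 'I_m, smoothable b (c t) (c (ordS t))].

Definition cycle_edge n m (c : 'I_m -> 'I_n) (u v : 'I_n) : Prop :=
  exists t : 'I_m, (u = c t /\ v = c (ordS t)) \/ (v = c t /\ u = c (ordS t)).

Definition submx_on n (lam : 'M[C]_n) (I : {set 'I_n}) : 'M[C]_#|I| :=
  \matrix_(i < #|I|, j < #|I|) lam (enum_val i) (enum_val j).

End Defs.

From HB Require Import structures.
From mathcomp Require Import all_boot all_order all_algebra.
From mathcomp Require Import zify ring.
Set Implicit Arguments. Unset Strict Implicit. Unset Printing Implicit Defensive.
Import Order.TTheory GRing.Theory Num.Theory.
Local Open Scope ring_scope.

(* Write b_t := b(c_t, c_(t+1)) along the cycle c.  The two natural numbers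
   attached to the angles at c_(t+2) and at c_t of consecutive edges satisfy
   (theta + 1) b_t = (theta' + 1) b_(t+1), so all b_t are positive multiples
   of b_0.  For z off the cycle, b(z,c_t) - b(z,c_(t+1)) = theta_t(z) b_t
   telescopes to 0, and as the theta_t(z) are natural numbers they all vanish:
   every row of b outside I is constant on I.  The space of vectors supported
   on I with zero sum is then stable under b + J/n, hence under its inverse
   lam + J/n, which is (3).  From (3) the block of lam on I is normalized, of
   corank one, with biresidue the block of b on I; its angles are those of b,
   and a coloured angle i-k-j with i, j outside I and k in I would make theta
   a positive integer constant on the at least 3 vertices of I, although the
   thetas of an edge sum to 2.  Finally a chord
   {c_p, c_q} of the cycle cuts it into two smoothable cycles meeting only at
   c_p and c_q, so columns c_p and c_q of b agree off {c_p, c_q}, which forces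
   b(c_p, c_q) = 0 since the columns of b sum to 0. *)

Section Alternating.
Variables (C : numClosedFieldType) (n : nat) (b : 'M[C]_n).
Hypothesis b_alt : alternating b.

Lemma alternating_diag i : b i i = 0.
Proof. by apply/eqP; rewrite -eqNr -b_alt. Qed.

Lemma alternating_colsum : normalized b -> forall i, \sum_k b k i = 0.
Proof.
move=> b_norm i; under eq_bigr do rewrite b_alt.
by rewrite sumrN b_norm oppr0.
Qed.

Lemma alternating_sum_on (P : pred 'I_n) : \sum_(i | P i) \sum_(j | P j) b i j = 0.
Proof.
apply/eqP; rewrite -eqNr -sumrN [X in _ == X]exchange_big /=.
by apply/eqP/eq_bigr => i _; rewrite -sumrN; apply: eq_bigr => j _; rewrite b_alt opprK.
Qed.

Lemma cols_agree_entry0 i j : normalized b -> i != j ->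
  (forall z, z != i -> z != j -> b z i = b z j) -> b i j = 0.
Proof.
move=> b_norm ij cols_eq.
have : \sum_z (b z i - b z j) = 0 by rewrite sumrB !alternating_colsum // subrr.
rewrite (bigD1 i) //= (bigD1 j) 1?eq_sym //= big1 => [|z /andP[zi zj]]; last first.
  by rewrite cols_eq ?subrr.
rewrite !alternating_diag // (b_alt i j) sub0r subr0 addr0 => /eqP.
by rewrite -opprD oppr_eq0 -mulr2n mulrn_eq0 => /eqP.
Qed.

Lemma theta_mulr i j k : b i j != 0 -> theta b i j k * b i j = b k i - b k j.
Proof. by move=> bij_nz; rewrite /theta divfK // (b_alt k j) addrC. Qed.

Lemma theta_sym i j k : theta b j i k = theta b i j k.
Proof.
rewrite /theta (b_alt i j) (b_alt k i) (b_alt j k) invrN mulrN -mulNr.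
by rewrite opprD !opprK addrC.
Qed.

Lemma smoothable_sym i j : smoothable b i j -> smoothable b j i.
Proof.
case=> ij bij_nz theta_nat; split=> [||k ki kj]; first by rewrite eq_sym.
  by rewrite b_alt oppr_eq0.
by rewrite theta_sym; apply: theta_nat.
Qed.

Lemma theta_sum i j : normalized b -> i != j -> b i j != 0 ->
  \sum_(k | (k != i) && (k != j)) theta b i j k = 2%:R.
Proof.
move=> b_norm ij bij_nz; apply: (mulIf bij_nz).
have : \sum_k (b k i - b k j) = 0 by rewrite sumrB !alternating_colsum // subrr.
rewrite (bigD1 i) //= (bigD1 j) 1?eq_sym //= !alternating_diag (b_alt i j).
rewrite mulr_suml (eq_bigr _ (fun k _ => theta_mulr k bij_nz)).
rewrite sub0r subr0 addrA -opprD addrC => /eqP; rewrite subr_eq0 => /eqP ->.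
by rewrite mulr_natl mulr2n.
Qed.

End Alternating.

Lemma ordS_val k (t : 'I_k) : val (ordS t) = if t.+1 == k then 0%N else t.+1.
Proof.
case: eqP => [tk|tk]; first by rewrite /= tk modnn.
by rewrite /= modn_small // ltn_neqAle ltn_ord andbT; apply/eqP.
Qed.

Lemma ordS_ind k (t0 : 'I_k) : val t0 = 0%N -> forall P : 'I_k -> Prop,
  P t0 -> (forall t, P t -> P (ordS t)) -> forall t, P t.
Proof.
move=> t00 P Pt0 PS [t tk]; elim: t tk => [|t IHt] tk.
  by rewrite (_ : Ordinal tk = t0) //; apply: val_inj.
have tk' := ltnW tk.
rewrite (_ : Ordinal tk = ordS (Ordinal tk')); first exact/PS/IHt.
by apply: val_inj; rewrite ordS_val /= ltn_eqF.
Qed.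

Lemma ordS_neq k (t : 'I_k) : (3 <= k)%N -> ordS t != t /\ ordS (ordS t) != t.
Proof.
move=> k3; rewrite -!(inj_eq val_inj) !ordS_val.
by case: t => t tk /=; split; repeat case: eqP => /=; lia.
Qed.

Section SmoothableCycle.
Variables (C : numClosedFieldType) (n k : nat) (b : 'M[C]_n) (d : 'I_k -> 'I_n).
Hypotheses (b_alt : alternating b) (d_cycle : smoothable_cycle b d).

Lemma smoothable_cycle_step t : exists2 q : C, 0 < q &
  b (d (ordS t)) (d (ordS (ordS t))) = q * b (d t) (d (ordS t)).
Proof.
have [k3 d_inj d_smooth] := d_cycle; have [tS tSS] := ordS_neq t k3.
have [_ buv_nz theta_uv] := d_smooth t.
have [_ bvw_nz theta_vw] := d_smooth (ordS t).
set u := d t in buv_nz theta_uv theta_vw *.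
set v := d (ordS t) in buv_nz bvw_nz theta_uv theta_vw *.
set w := d (ordS (ordS t)) in bvw_nz theta_uv theta_vw *.
have [m1 theta_w] : exists m1 : nat, theta b u v w = m1%:R.
  by apply: theta_uv; rewrite (inj_eq d_inj) // (inj_eq (@ordS_inj k)).
have [m2 theta_u] : exists m2 : nat, theta b v w u = m2%:R.
  by apply: theta_vw; rewrite (inj_eq d_inj) // eq_sym.
have e_w := theta_mulr b_alt w buv_nz; have e_u := theta_mulr b_alt u bvw_nz.
rewrite theta_w (b_alt u w) (b_alt v w) in e_w; rewrite theta_u in e_u.
have m2S_nz : m2.+1%:R != 0 :> C by rewrite pnatr_eq0.
exists (m1.+1%:R / m2.+1%:R); first by rewrite divr_gt0 ?ltr0Sn.
apply: (mulfI m2S_nz); rewrite mulrA mulrCA divff // mulr1.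
by rewrite -!natr1 !mulrDl e_w e_u; ring.
Qed.

Lemma smoothable_cycle_ratio_gt0 (t0 t : 'I_k) : val t0 = 0%N ->
  0 < b (d t) (d (ordS t)) / b (d t0) (d (ordS t0)).
Proof.
move=> t00; have [_ _ d_smooth] := d_cycle; have [_ b0_nz _] := d_smooth t0.
elim/(ordS_ind t00): t => [|t ratio_gt0]; first by rewrite divff // ltr01.
by have [q q_gt0 ->] := smoothable_cycle_step t; rewrite -mulrA mulr_gt0.
Qed.

Lemma smoothable_cycle_row_const z : z \notin [set d t | t : 'I_k] ->
  forall t t', b z (d t) = b z (d t').
Proof.
move=> z_out; have [k3 _ d_smooth] := d_cycle.
have k_gt0 : (0 < k)%N by lia.
pose t0 := Ordinal k_gt0; pose beta t := b (d t) (d (ordS t)).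
pose th t := theta b (d t) (d (ordS t)) z.
have z_neq t : z != d t by apply: contraNneq z_out => ->; apply: imset_f.
have th_nat t : exists m : nat, th t = m%:R by case: (d_smooth t) => _ _; apply.
have diff_th t : b z (d t) - b z (d (ordS t)) = th t * beta t.
  by rewrite theta_mulr //; case: (d_smooth t).
have weighted_sum0 : \sum_t th t * (beta t / beta t0) = 0.
  under eq_bigr do rewrite mulrA -diff_th.
  by rewrite -mulr_suml sumrB (reindex_inj (@ordS_inj k)) subrr mul0r.
have weight_gt0 t : 0 < beta t / beta t0 by apply: smoothable_cycle_ratio_gt0.
have th0 t : th t = 0.
  have nonneg s (_ : true) : 0 <= th s * (beta s / beta t0).
    by have [m ->] := th_nat s; rewrite mulr_ge0 ?ler0n ?ltW ?weight_gt0.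
  have /eqP := psumr_eq0P nonneg weighted_sum0 (i := t) isT.
  by rewrite mulf_eq0 (gt_eqF (weight_gt0 t)) orbF => /eqP.
have step t : b z (d t) = b z (d (ordS t)).
  by apply/eqP; rewrite -subr_eq0 diff_th th0 mul0r.
have const t : b z (d t) = b z (d t0) by elim/(@ordS_ind _ t0 erefl): t => // t <-.
by move=> t t'; rewrite !const.
Qed.

End SmoothableCycle.

Lemma mulmx_shift_const (R : comPzRingType) n (A B : 'M[R]_n) (a : R) :
    (forall i, \sum_k A i k = 0) -> (forall j, \sum_k B k j = 0) ->
  (A + a *: const_mx 1) *m (B + a *: const_mx 1) = A *m B + (a * a *+ n) *: const_mx 1.
Proof.
move=> A_rows B_cols; apply/matrixP => x y; rewrite !mxE.
rewrite (eq_bigr (fun k => A x k * B k y + (A x k * a + (a * B k y + a * a)))).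
  2: by move=> k _; rewrite !mxE mulr1; ring.
rewrite !big_split /= -mulr_suml -mulr_sumr A_rows B_cols sumr_const card_ord.
by rewrite mul0r mulr0 !add0r mulr1.
Qed.

Section Biresidue.
Variables (C : numClosedFieldType) (n : nat) (lam b : 'M[C]_n).
Hypotheses (lam_alt : alternating lam) (lam_norm : normalized lam).
Hypothesis lam_b : is_biresidue lam b.

Lemma biresidue_mulmx x y : (b *m lam) x y = (x == y)%:R - n%:R^-1.
Proof.
have [_ _ b_inv] := lam_b.
have n_nz : n%:R != 0 :> C by rewrite pnatr_eq0 -lt0n (leq_ltn_trans _ (ltn_ord x)).
pose z : 'cV[C]_n := \col_i ((i == y)%:R - n%:R^-1).
have z_Delta : in_Delta z.
  rewrite /in_Delta; under eq_bigr do rewrite mxE.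
  rewrite sumrB sumr_const card_ord -[_^-1 *+ n]mulr_natr mulVf // (bigD1 y) //= eqxx.
  by rewrite big1 ?addr0 ?subrr // => i /negbTE ->.
have lam_z k : (lam *m z) k 0 = lam k y.
  rewrite mxE; under eq_bigr do rewrite mxE mulrBr.
  rewrite sumrB -mulr_suml lam_norm mul0r subr0 (bigD1 y) //= eqxx mulr1.
  by rewrite big1 ?addr0 // => i /negbTE ->; rewrite mulr0.
have := congr1 (fun v : 'cV[C]_n => v x 0) (b_inv z z_Delta).
by rewrite !mxE; under eq_bigr do rewrite lam_z.
Qed.

Let n_inv_sqr : n%:R^-1 * n%:R^-1 *+ n = n%:R^-1 :> C.
Proof.
case: n => [|k]; first by rewrite mulr0n invr0.
by rewrite -mulrnAr -[_^-1 *+ _]mulr_natr mulVf ?pnatr_eq0 // mulr1.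
Qed.

Lemma biresidue_shift_mulmx :
  (b + n%:R^-1 *: const_mx 1) *m (lam + n%:R^-1 *: const_mx 1) = 1%:M.
Proof.
have [b_alt b_norm _] := lam_b.
rewrite mulmx_shift_const //; last exact: alternating_colsum.
by apply/matrixP => x y; rewrite n_inv_sqr mxE biresidue_mulmx !mxE mulr1 subrK.
Qed.

Lemma mulmx_biresidue x y : (lam *m b) x y = (x == y)%:R - n%:R^-1.
Proof.
have [b_alt b_norm _] := lam_b.
have := mulmx1C biresidue_shift_mulmx.
rewrite mulmx_shift_const //; last exact: alternating_colsum.
by move/matrixP/(_ x y); rewrite n_inv_sqr !mxE mulr1 => <-; rewrite addrK.
Qed.

End Biresidue.

Lemma stablemx_inv (F : fieldType) p n (S : 'M[F]_(p, n)) (M N : 'M[F]_n) :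
  M *m N = 1%:M -> stablemx S M -> stablemx S N.
Proof.
move=> MN SM_S; have M_unit : M \in unitmx by case/mulmx1_unit: MN.
have S_SM : (S <= S *m M)%MS.
  by rewrite -(mxrank_leqif_sup SM_S).2 mxrankMfree ?row_free_unit.
by apply: submx_trans (submxMr N S_SM) _; rewrite -mulmxA MN mulmx1.
Qed.

Lemma stablemx_kermx (F : fieldType) n (K M : 'M[F]_n) :
  (forall r : 'rV_n, r *m K = 0 -> r *m M *m K = 0) -> stablemx (kermx K) M.
Proof.
move=> rows_stable; rewrite sub_kermx; apply/eqP/row_matrixP => i.
have := rows_stable (row i (kermx K)); rewrite -!row_mul mulmx_ker row0.
by move/(_ erefl).
Qed.

Section Collapse.
Variables (R : pzRingType) (n : nat) (I : {set 'I_n}).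

Definition collapse_mx : 'M[R]_n :=
  \matrix_(i, j) (if j \in I then 1 else (i == j)%:R).

Lemma mulmx_collapse (r : 'rV[R]_n) j :
  (r *m collapse_mx) 0 j = if j \in I then \sum_i r 0 i else r 0 j.
Proof.
rewrite mxE; case: ifP => jI; first by apply: eq_bigr => i _; rewrite mxE jI mulr1.
rewrite (bigD1 j) //= mxE jI eqxx mulr1 big1 ?addr0 // => i /negbTE ij.
by rewrite mxE jI ij mulr0.
Qed.

Lemma mulmx_collapse_eq0 (r : 'rV[R]_n) x0 : x0 \in I ->
  r *m collapse_mx = 0 <-> (forall j, j \notin I -> r 0 j = 0) /\ \sum_i r 0 i = 0.
Proof.
move=> x0I; split=> [r0|[r_out r_sum]].
  split=> [j jI|]; first by have /rowP/(_ j) := r0; rewrite mulmx_collapse (negbTE jI) mxE.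
  by have /rowP/(_ x0) := r0; rewrite mulmx_collapse x0I mxE.
by apply/rowP => j; rewrite mulmx_collapse mxE; case: ifP => // /negbT /r_out.
Qed.

End Collapse.

Definition homogeneous T n (A : 'M[T]_n) (I : {set 'I_n}) :=
  forall z, z \notin I -> forall u v, u \in I -> v \in I -> A z u = A z v.

Section Homogeneous.
Variables (C : numClosedFieldType) (n : nat) (I : {set 'I_n}).

Lemma homogeneous_col_const (A : 'M[C]_n) : alternating A -> homogeneous A I ->
  forall u v y, u \in I -> v \in I -> y \notin I -> A u y = A v y.
Proof. by move=> A_alt A_hom u v y uI vI yI; rewrite A_alt (A_hom y yI u v) // -A_alt. Qed.

Lemma collapse_ker_stable (b : 'M[C]_n) (c : C) x0 : x0 \in I ->
    alternating b -> normalized b -> homogeneous b I ->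
  stablemx (kermx (collapse_mx C I)) (b + c *: const_mx 1).
Proof.
move=> x0I b_alt b_norm b_hom; apply: stablemx_kermx => r.
move=> /(mulmx_collapse_eq0 r x0I) [r_out r_sum]; apply/(mulmx_collapse_eq0 _ x0I).
have rM_E j : (r *m (b + c *: const_mx 1)) 0 j = \sum_k r 0 k * (b k j + c).
  by rewrite mxE; apply: eq_bigr => k _; rewrite !mxE mulr1.
split=> [j jI|].
  rewrite rM_E (eq_bigr (fun k => r 0 k * (c - b j x0))) => [|k _].
    by rewrite -mulr_suml r_sum mul0r.
  have [kI|kI] := boolP (k \in I); last by rewrite r_out // !mul0r.
  by rewrite (b_alt j k) (b_hom j jI k x0) // addrC.
under eq_bigr do rewrite rM_E.
rewrite exchange_big (eq_bigr (fun k => r 0 k * (c *+ n))) => [|k _] /=.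
  by rewrite -mulr_suml r_sum mul0r.
by rewrite -mulr_sumr big_split /= b_norm add0r sumr_const card_ord.
Qed.

Lemma homogeneous_biresidue (lam b : 'M[C]_n) :
    alternating lam -> normalized lam -> is_biresidue lam b ->
  homogeneous b I -> homogeneous lam I.
Proof.
move=> lam_alt lam_norm lam_b b_hom z zI u v uI vI.
have [b_alt b_norm _] := lam_b.
pose K := collapse_mx C I.
have lam_stable : stablemx (kermx K) (lam + n%:R^-1 *: const_mx 1).
  apply: stablemx_inv (biresidue_shift_mulmx lam_alt lam_norm lam_b) _.
  exact: collapse_ker_stable uI b_alt b_norm b_hom.
pose r : 'rV[C]_n := delta_mx 0 u - delta_mx 0 v.
have r_ker : (r <= kermx K)%MS.
  rewrite sub_kermx; apply/eqP/(mulmx_collapse_eq0 r uI); split=> [j jI|].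
    by rewrite !mxE !(eq_sym j) (negbTE (memPn jI u uI)) (negbTE (memPn jI v vI)) subrr.
  have sum_delta w : \sum_i (delta_mx 0 w : 'rV[C]_n) 0 i = 1.
    by rewrite (bigD1 w) //= mxE !eqxx big1 ?addr0 // => i /negbTE iw; rewrite mxE iw andbF.
  rewrite (_ : \sum_i r 0 i = \sum_i (delta_mx 0 u : 'rV[C]_n) 0 i
                              - \sum_i (delta_mx 0 v : 'rV[C]_n) 0 i).
    by rewrite !sum_delta subrr.
  by rewrite -sumrB; apply: eq_bigr => i _; rewrite !mxE.
have := submx_trans (submxMr _ r_ker) lam_stable.
rewrite sub_kermx => /eqP /(mulmx_collapse_eq0 _ uI) [/(_ z zI) + _].
rewrite mulmxBl -!rowE !mxE => /eqP; rewrite subr_eq0 => /eqP /addIr lam_uz.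
by rewrite (lam_alt u z) (lam_alt v z) lam_uz.
Qed.

End Homogeneous.

Section HomogeneousTheta.
Variables (C : numClosedFieldType) (n : nat) (b : 'M[C]_n) (I : {set 'I_n}).
Hypotheses (b_alt : alternating b) (b_hom : homogeneous b I).

Lemma theta_homogeneous_out x y z : x \in I -> y \in I -> z \notin I -> theta b x y z = 0.
Proof. by move=> xI yI zI; rewrite /theta (b_alt z y) (b_hom zI xI yI) addNr mul0r. Qed.

Lemma theta_homogeneous_in i j k : normalized b -> (3 <= #|I|)%N ->
  i \notin I -> j \notin I -> smoothable b i j -> k \in I -> theta b i j k = 0.
Proof.
move=> b_norm I3 iI jI [ij bij_nz theta_nat] kI.
have off_ij z : z \in I -> (z != i) && (z != j).
  by move=> zI; apply/andP; split; apply: contraTneq zI => ->.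
have theta_const z : z \in I -> theta b i j z = theta b i j k.
  by move=> zI; rewrite /theta (b_hom jI zI kI) (b_alt i z) (b_alt i k) (b_hom iI zI kI).
have /andP[ki kj] := off_ij k kI; have [m theta_m] := theta_nat k ki kj.
have : (m * #|I|)%:R <= 2%:R :> C.
  rewrite -(theta_sum b_alt b_norm ij bij_nz) (bigID (mem I)) /=.
  rewrite (eq_bigl (mem I)) => [|z]; last first.
    by rewrite andbC -[mem I z]/(z \in I); case: (boolP (z \in I)) => //= /off_ij.
  rewrite (eq_bigr _ theta_const) sumr_const theta_m natrM mulr_natr lerDl.
  by apply: sumr_ge0 => z /andP[/andP[zi zj] _]; have [m' ->] := theta_nat z zi zj.
rewrite ler_nat theta_m; case: m {theta_m} => // m; lia.
Qed.

Lemma angle_colored_homogeneous i j k : normalized b -> (3 <= #|I|)%N ->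
    angle_colored b i j k ->
  (i \in I -> j \in I -> k \in I) /\ (i \notin I -> j \notin I -> k \notin I).
Proof.
move=> b_norm I3 [sij _ _ theta_nz]; split=> iI jI.
  by apply: contraNT theta_nz => kI; rewrite theta_homogeneous_out.
by apply: contraL theta_nz => kI; rewrite (theta_homogeneous_in b_norm I3 iI jI sij) ?eqxx.
Qed.

Lemma theta_submx_on i j k :
  theta (submx_on b I) i j k = theta b (enum_val i) (enum_val j) (enum_val k).
Proof. by rewrite /theta !mxE. Qed.

Lemma smoothable_submx_on i j :
  smoothable (submx_on b I) i j <-> smoothable b (enum_val i) (enum_val j).
Proof.
rewrite /smoothable (inj_eq enum_val_inj) mxE.
split=> -[ij bij_nz theta_nat]; split=> //.
  move=> z zi zj; have [zI|zI] := boolP (z \in I); last first.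
    by exists 0%N; rewrite theta_homogeneous_out ?enum_valP.
  have zE : enum_val (enum_rank_in zI z) = z by rewrite enum_rankK_in.
  rewrite -zE -theta_submx_on; apply: theta_nat; rewrite -(inj_eq enum_val_inj) zE //.
by move=> k ki kj; rewrite theta_submx_on; apply: theta_nat; rewrite (inj_eq enum_val_inj).
Qed.

Lemma angles_submx_on i j k :
  [/\ angle_colored (submx_on b I) i j k <->
        angle_colored b (enum_val i) (enum_val j) (enum_val k),
      angle_dark (submx_on b I) i j k <->
        angle_dark b (enum_val i) (enum_val j) (enum_val k) &
      angle_light (submx_on b I) i j k <->
        angle_light b (enum_val i) (enum_val j) (enum_val k)].
Proof.
rewrite /angle_colored /angle_dark /angle_light theta_submx_on !(inj_eq enum_val_inj).
by have smooth := smoothable_submx_on i j; split; split=> -[/smooth].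
Qed.

End HomogeneousTheta.

Section Block.
Variables (C : numClosedFieldType) (n : nat) (lam b : 'M[C]_n) (I : {set 'I_n}).
Hypotheses (lam_alt : alternating lam) (lam_norm : normalized lam).
Hypotheses (lam_b : is_biresidue lam b) (b_hom : homogeneous b I).

Let b_alt : alternating b. Proof. by case: lam_b. Qed.
Let b_norm : normalized b. Proof. by case: lam_b. Qed.
Let lam_hom : homogeneous lam I. Proof. exact: homogeneous_biresidue b_hom. Qed.

Lemma block_rowsum x : x \in I -> \sum_(y in I) lam x y = 0.
Proof.
move=> xI.
have row_in u : u \in I -> \sum_(y in I) lam u y = \sum_(y in I) lam x y.
  have row_out w : \sum_(y in I) lam w y = - \sum_(y | y \notin I) lam w y.
    by have /eqP := lam_norm w; rewrite (bigID (mem I)) /= addr_eq0 => /eqP.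
  move=> uI; rewrite !row_out; congr (- _); apply: eq_bigr => y yI.
  exact: homogeneous_col_const lam_alt lam_hom _ _ _ uI xI yI.
have /eqP := alternating_sum_on lam_alt (mem I).
rewrite (eq_bigr _ row_in) sumr_const mulrn_eq0 => /orP[|/eqP //].
by rewrite eqn0Ngt => /negP[]; apply/card_gt0P; exists x.
Qed.

Lemma submx_on_normalized : normalized (submx_on lam I).
Proof.
move=> i; under eq_bigr do rewrite mxE.
by rewrite -(big_enum_val (fun y => lam (enum_val i) y)) block_rowsum ?enum_valP.
Qed.

Lemma biresidue_submx_on bI : is_biresidue (submx_on lam I) bI -> bI = submx_on b I.
Proof.
case=> [bI_alt _ bI_inv]; apply/matrixP => i j; rewrite mxE.
set x := enum_val i; set y := enum_val j.
have b_diff_out z : z \notin I -> b z x - b z y = 0.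
  by move=> zI; rewrite (b_hom zI (enum_valP i) (enum_valP j)) subrr.
pose v : 'cV[C]_#|I| := \col_k (b (enum_val k) x - b (enum_val k) y).
have v_Delta : in_Delta v.
  rewrite /in_Delta; under eq_bigr do rewrite mxE.
  rewrite -(big_enum_val (fun z => b z x - b z y)).
  have : \sum_z (b z x - b z y) = 0 by rewrite sumrB !alternating_colsum // subrr.
  by rewrite (bigID (mem I)) /= [X in _ + X]big1 ?addr0.
have lam_v : submx_on lam I *m v = delta_mx i 0 - delta_mx j 0.
  apply/colP => l; rewrite !mxE.
  under eq_bigr do rewrite !mxE.
  rewrite -(big_enum_val (fun z => lam (enum_val l) z * (b z x - b z y))).
  have : \sum_z lam (enum_val l) z * (b z x - b z y) =
      (enum_val l == x)%:R - (enum_val l == y)%:R.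
    under eq_bigr do rewrite mulrBr.
    have lam_b_row w : \sum_z lam (enum_val l) z * b z w = (enum_val l == w)%:R - n%:R^-1.
      by rewrite -(mulmx_biresidue lam_alt lam_norm lam_b) mxE.
    by rewrite sumrB !lam_b_row opprB addrA subrK.
  rewrite (bigID (mem I)) /= [X in _ + X]big1 ?addr0 => [->|z /b_diff_out ->].
    by rewrite !(inj_eq enum_val_inj) !andbT.
  by rewrite mulr0.
have := congr1 (fun w : 'cV[C]_#|I| => w i 0) (bI_inv v v_Delta).
by rewrite lam_v mulmxBr -!colE !mxE -/x !alternating_diag // !sub0r => /oppr_inj.
Qed.

Lemma submx_on_biresidue_mulmx x0 : x0 \in I ->
  exists g, submx_on b I *m submx_on lam I = 1%:M - g *: const_mx 1.
Proof.
move=> x0I; exists (n%:R^-1 + \sum_(z | z \notin I) b z x0 * lam x0 z).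
apply/matrixP => i j; rewrite !mxE mulr1.
under eq_bigr do rewrite !mxE.
rewrite -(big_enum_val (fun z => b (enum_val i) z * lam z (enum_val j))) /=.
have := biresidue_mulmx lam_norm lam_b (enum_val i) (enum_val j).
rewrite mxE (bigID (mem I)) /= (inj_eq enum_val_inj) => /(canRL (addrK _)) ->.
rewrite opprD addrA; congr (_ - _); apply: eq_bigr => z zI.
rewrite (b_alt z) (lam_alt (enum_val j)) mulrNN (b_hom zI (enum_valP i) x0I).
by rewrite (homogeneous_col_const lam_alt lam_hom (enum_valP j) x0I zI).
Qed.

Lemma rank_submx_on x0 : x0 \in I -> \rank (submx_on lam I) = #|I|.-1.
Proof.
move=> x0I; have card_gt0 : (0 < #|I|)%N by apply/card_gt0P; exists x0.
have lamI_alt : alternating (submx_on lam I) by move=> i j; rewrite !mxE lam_alt.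
have ones_ker : (const_mx 1 : 'rV[C]_#|I|) *m submx_on lam I = 0.
  apply/rowP => j; rewrite !mxE; under eq_bigr do rewrite mxE mul1r.
  exact: alternating_colsum lamI_alt submx_on_normalized j.
have ones_nz : (const_mx 1 : 'rV[C]_#|I|) != 0.
  by apply/eqP => /rowP /(_ (Ordinal card_gt0)) /eqP; rewrite !mxE oner_eq0.
have rank_le : (\rank (submx_on lam I) <= #|I|.-1)%N.
  have := mxrankS (introT sub_kermxP ones_ker).
  by rewrite mxrank_ker rank_rV ones_nz; lia.
have [g bI_lamI] := submx_on_biresidue_mulmx x0I.
have rank_J : (\rank (g *: const_mx 1 : 'M[C]_#|I|)%R <= 1)%N.
  rewrite (_ : g *: const_mx 1 = (g *: const_mx 1 : 'cV[C]_#|I|) *m (const_mx 1 : 'rV_#|I|)).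
    exact: mulmx_max_rank.
  by apply/matrixP => i j; rewrite !mxE big_ord1 !mxE !mulr1.
have : (#|I| <= \rank (submx_on lam I) + 1)%N.
  rewrite -{1}(mxrank1 C #|I|) -(subrK (g *: const_mx 1) 1%:M) -bI_lamI.
  by apply: leq_trans (mxrank_add _ _) (leq_add (mxrankM_maxr _ _) rank_J).
lia.
Qed.

End Block.

Lemma modn_sub_small x d : (d <= x < d + d)%N -> (x %% d = x - d)%N.
Proof. by case/andP=> dx xd; rewrite -{1}(subnK dx) modnDr modn_small // ltn_subLR. Qed.

Definition cycle_walk T m (c : 'I_m.+1 -> T) (s : nat) : T := c (inord (s %% m.+1)).

Section Chord.
Variables (C : numClosedFieldType) (n m : nat) (b : 'M[C]_n) (c : 'I_m.+1 -> 'I_n).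
Hypotheses (b_alt : alternating b) (b_norm : normalized b) (c_cycle : smoothable_cycle b c).

Local Notation walk := (cycle_walk c).

Lemma cycle_walk_ord (t : 'I_m.+1) : walk t = c t.
Proof. by rewrite /cycle_walk modn_small ?inord_val. Qed.

Lemma cycle_walk_inj s s' : walk s = walk s' -> s = s' %[mod m.+1].
Proof.
have [_ c_inj _] := c_cycle.
by move=> /c_inj /(congr1 val); rewrite /= !inordK ?ltn_pmod.
Qed.

Lemma cycle_walk_smoothable s : smoothable b (walk s) (walk s.+1).
Proof.
have [_ _ c_smooth] := c_cycle.
rewrite /cycle_walk (_ : inord (s.+1 %% m.+1) = ordS (inord (s %% m.+1))); first exact: c_smooth.
by apply: val_inj; rewrite /= !inordK ?ltn_pmod // -[(s %% _).+1]addn1 modnDml addn1.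
Qed.

Lemma arc_smoothable_cycle a l : (2 <= l <= m)%N ->
  smoothable b (walk (a + l)) (walk a) -> smoothable_cycle b (fun s : 'I_l.+1 => walk (a + s)).
Proof.
case/andP=> l2 lm closing; split=> [|[s sl] [s' s'l] /cycle_walk_inj/eqP|s]; first by [].
  by rewrite /= eqn_modDl !modn_small => [/eqP s_eq||]; [apply: val_inj | lia | lia].
rewrite ordS_val; case: eqP => [/succn_inj s_l|_]; first by rewrite addn0 s_l.
by rewrite addnS; apply: cycle_walk_smoothable.
Qed.

Lemma cycle_walk_addr s : walk (s + m.+1) = walk s.
Proof. by rewrite /cycle_walk modnDr. Qed.

Lemma cycle_arcs_meet p q (s1 s2 : nat) :
    (p < q <= m)%N -> (s1 <= q - p)%N -> (s2 <= m.+1 - (q - p))%N ->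
  walk (p + s1) = walk (q + s2) -> s1 = 0%N \/ s2 = 0%N.
Proof.
move=> /andP[pq qm] s1_le s2_le /cycle_walk_inj; rewrite modn_small; last lia.
have [q_s2|q_s2] := ltnP (q + s2) m.+1; first by rewrite modn_small //; lia.
by rewrite modn_sub_small; lia.
Qed.

Lemma cycle_chord_cols_agree (p q : 'I_m.+1) : (p < q)%N -> (q : nat) != p.+1 ->
    ~~ ((p == 0 :> nat) && (q == m :> nat)) -> smoothable b (c p) (c q) ->
  forall z, z != c p -> z != c q -> b z (c p) = b z (c q).
Proof.
move=> pq qS wrap spq z zp zq; have q_lt := ltn_ord q.
pose l1 := (q - p)%N; pose l2 := (m.+1 - l1)%N.
have [l1E l2E] : l1 = (q - p)%N /\ l2 = (m.+1 - l1)%N by [].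
have end1 : walk (p + l1) = c q by rewrite subnKC ?cycle_walk_ord // ltnW.
have end2 : walk (q + l2) = c p.
  by rewrite (_ : q + l2 = p + m.+1)%N ?cycle_walk_addr ?cycle_walk_ord //; lia.
have arc1 : smoothable_cycle b (fun s : 'I_l1.+1 => walk (p + s)).
  apply: arc_smoothable_cycle; first lia.
  by rewrite end1 cycle_walk_ord; apply: smoothable_sym.
have arc2 : smoothable_cycle b (fun s : 'I_l2.+1 => walk (q + s)).
  apply: arc_smoothable_cycle; last by rewrite end2 cycle_walk_ord.
  by move: wrap; rewrite negb_and => /orP[] /eqP; lia.
have [z1|z1] := boolP (z \in [set walk (p + s) | s : 'I_l1.+1]); last first.
  have := smoothable_cycle_row_const b_alt arc1 z1 ord0 ord_max.
  by rewrite /= addn0 end1 cycle_walk_ord.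
suff z2 : z \notin [set walk (q + s) | s : 'I_l2.+1].
  have := smoothable_cycle_row_const b_alt arc2 z2 ord_max ord0.
  by rewrite /= addn0 end2 cycle_walk_ord.
apply/imsetP => -[s2 _ z_s2]; case/imsetP: z1 => s1 _ z_s1.
have pqm : (p < q <= m)%N by rewrite pq -ltnS.
have [s1_le s2_le] : (s1 <= l1)%N /\ (s2 <= l2)%N by split; rewrite -ltnS.
have [s1_0|s2_0] := cycle_arcs_meet pqm s1_le s2_le (etrans (esym z_s1) z_s2).
- by move: zp; rewrite z_s1 s1_0 addn0 cycle_walk_ord eqxx.
- by move: zq; rewrite z_s2 s2_0 addn0 cycle_walk_ord eqxx.
Qed.

Lemma smoothable_cycle_chord (p q : 'I_m.+1) : (p < q)%N ->
  smoothable b (c p) (c q) -> cycle_edge c (c p) (c q).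
Proof.
move=> pq spq; have [cpq bpq_nz _] := spq.
have [qS|qS] := eqVneq (q : nat) p.+1.
  exists p; left; split=> //; congr c; apply: val_inj.
  by rewrite ordS_val -qS ltn_eqF.
have [wrap|wrap] := boolP ((p == 0 :> nat) && (q == m :> nat)).
  case/andP: wrap => /eqP p0 /eqP qm; exists q; right; split=> //; congr c.
  by apply: val_inj; rewrite ordS_val qm eqxx.
case/eqP: bpq_nz; apply: cols_agree_entry0 => //.
exact: cycle_chord_cols_agree.
Qed.

Lemma smoothable_cycle_edge (p q : 'I_m.+1) :
  smoothable b (c p) (c q) <-> cycle_edge c (c p) (c q).
Proof.
have [_ _ c_smooth] := c_cycle.
split=> [spq|[t [[-> ->]|[-> ->]]]]; last 2 first.
- exact: c_smooth.
- exact/smoothable_sym/c_smooth.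
case: (ltngtP p q) => [pq|qp|/val_inj pq]; first exact: smoothable_cycle_chord.
  have [t edge_t] := smoothable_cycle_chord qp (smoothable_sym b_alt spq).
  by exists t; case: edge_t; [right|left].
by case: spq; rewrite pq eqxx.
Qed.

End Chord.

Unset Implicit Arguments.

Theorem lemma5p12 (C : numClosedFieldType) (n : nat) (lam b : 'M[C]_n)
    (m : nat) (c : 'I_m -> 'I_n) :
  alternating lam -> normalized lam -> \rank lam = n.-1 ->
  is_biresidue lam b ->
  smoothable_cycle b c ->
  let I := [set c t | t : 'I_m] in
  (* (1) *)
  (forall i j k : 'I_n, smoothable b i j -> angle_colored b i j k ->
     (i \in I -> j \in I -> k \in I) /\
     (i \notin I -> j \notin I -> k \notin I)) /\
  (* (2) *)
  (normalized (submx_on lam I) /\ \rank (submx_on lam I) = #|I|.-1 /\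
   forall bI : 'M[C]_#|I|, is_biresidue (submx_on lam I) bI ->
     (forall i j : 'I_#|I|,
        smoothable bI i j <-> cycle_edge c (enum_val i) (enum_val j)) /\
     (forall i j k : 'I_#|I|, cycle_edge c (enum_val i) (enum_val j) ->
        [/\ angle_colored bI i j k <->
              angle_colored b (enum_val i) (enum_val j) (enum_val k),
            angle_dark bI i j k <->
              angle_dark b (enum_val i) (enum_val j) (enum_val k) &
            angle_light bI i j k <->
              angle_light b (enum_val i) (enum_val j) (enum_val k)])) /\
  (* (3) *)
  (forall i1 i2 j : 'I_n, i1 \in I -> i2 \in I -> j \notin I ->
     lam i1 j = lam i2 j).
Proof.
case: m c => [|m] c lam_alt lam_norm _ lam_b c_cycle I; first by case: c_cycle.
have [b_alt b_norm _] := lam_b; have [m3 c_inj _] := c_cycle.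
have b_hom : homogeneous b I.
  by move=> z zI u v /imsetP[t _ ->] /imsetP[t' _ ->]; apply: smoothable_cycle_row_const.
have lam_hom := homogeneous_biresidue lam_alt lam_norm lam_b b_hom.
have c0_I : c ord0 \in I by apply: imset_f.
have I3 : (3 <= #|I|)%N by rewrite card_imset // card_ord.
split; first by move=> i j k _; apply: angle_colored_homogeneous.
split; last exact: homogeneous_col_const lam_alt lam_hom.
split; first exact: submx_on_normalized lam_alt lam_norm lam_b b_hom.
split; first exact (rank_submx_on lam_alt lam_norm lam_b b_hom c0_I).
move=> bI /(biresidue_submx_on lam_alt lam_norm lam_b b_hom) ->.
split=> [i j|i j k _]; last exact: angles_submx_on.
rewrite smoothable_submx_on //.
have /imsetP[p _ ->] := enum_valP i; have /imsetP[q _ ->] := enum_valP j.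
exact: smoothable_cycle_edge.
Qed.
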